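(* Assume $n\ge3$. Let $|\Psi^{\mathrm h}_0\rangle$ and $|\Psi^{\mathrm c}_0\rangle$ be initial states with $p^{\mathrm h}_0(0)>0$, $p^{\mathrm c}_0(0)>0$, $D_I^{\mathrm h}(0)>D_I^{\mathrm c}(0)$, and additionally $p^{\mathrm h}_i(0)=0$ for all $i>2$ and $p^{\mathrm c}_j(0)=0$ for all $j>1$. With $r^{\mathrm h},r^{\mathrm c},s^{\mathrm h}$ as defined in the context, and $\epsilon>0$, the Mpemba effect with respect to $D_I$ occurs before the threshold $\epsilon$ if and only if $r^{\mathrm h}<r^{\mathrm c}$ and $$\epsilon<\left(1+\frac{1}{r^{\mathrm c}}\left(\frac{s^{\mathrm h}-r^{\mathrm h}}{r^{\mathrm c}-r^{\mathrm h}}\right)^{\frac{E_1}{E_2-E_1}}\right)^{-1}.$$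
   Context: Let $H$ be a Hamiltonian on an $n$-dimensional Hilbert space with nondegenerate eigenvalues $0=E_0<E_1<\dots<E_{n-1}$ and orthonormal eigenvectors $|E_i\rangle$. QITE of a pure state $|\Psi_0\rangle$ is $|\Psi(\tau)\rangle=e^{-H\tau}|\Psi_0\rangle/\sqrt{\langle\Psi_0|e^{-2H\tau}|\Psi_0\rangle}$, with populations $p_i(\tau)=|\langle E_i|\Psi(\tau)\rangle|^2=p_i(0)e^{-2E_i\tau}/\sum_j p_j(0)e^{-2E_j\tau}$, and ground-state infidelity $D_I(\tau)=1-p_0(\tau)$. Superscripts $\mathrm h,\mathrm c$ refer to the trajectories from $|\Psi^{\mathrm h}_0\rangle$, $|\Psi^{\mathrm c}_0\rangle$. Define $r^{\mathrm h}=p^{\mathrm h}_1(0)/p^{\mathrm h}_0(0)$, $r^{\mathrm c}=p^{\mathrm c}_1(0)/p^{\mathrm c}_0(0)$, $s^{\mathrm h}=(1-p^{\mathrm h}_0(0))/p^{\mathrm h}_0(0)$. ''The Mpemba effect occurs before the threshold $\epsilon$'' means: there exists $\tau^\star>0$ with $D_I^{\mathrm h}(\tau^\star)=D_I^{\mathrm c}(\tau^\star)>\epsilon$ and $D_I^{\mathrm h}(\tau)<D_I^{\mathrm c}(\tau)$ for all $\tau>\tau^\star$. *)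

From Stdlib Require Import Reals Lra.
Open Scope R_scope.

Fixpoint rsum (f : nat -> R) (n : nat) : R :=
  match n with
  | O => 0
  | S k => rsum f k + f k
  end.

(* QITE populations in the energy eigenbasis:
   p_i(tau) = p_i(0) e^{-2 E_i tau} / sum_{j<n} p_j(0) e^{-2 E_j tau}.
   [p0 i] = |<E_i|Psi_0>|^2 are the initial populations. *)
Definition pop (n : nat) (E p0 : nat -> R) (i : nat) (tau : R) : R :=
  p0 i * exp (-2 * E i * tau) / rsum (fun j => p0 j * exp (-2 * E j * tau)) n.

Definition DI (n : nat) (E p0 : nat -> R) (tau : R) : R := 1 - pop n E p0 0 tau.

Definition is_pop_vector (n : nat) (p0 : nat -> R) : Prop :=
  (forall i, (i < n)%nat -> 0 <= p0 i) /\ rsum p0 n = 1.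

Definition is_spectrum (n : nat) (E : nat -> R) : Prop :=
  E 0%nat = 0 /\ forall i, (S i < n)%nat -> E i < E (S i).

Definition mpemba_before (n : nat) (E ph pc : nat -> R) (eps : R) : Prop :=
  exists ts, 0 < ts /\ DI n E ph ts = DI n E pc ts /\ DI n E ph ts > eps /\
    forall t, t > ts -> DI n E ph t < DI n E pc t.

(* Since E_0 = 0 and the cold state lives on levels 0 and 1, after multiplying
   by positive denominators the comparison D_I^h(t) < D_I^c(t) becomes
   (s^h - r^h) e^{-2(E_2 - E_1)t} < r^c - r^h.  At t = 0 the reverse strict
   inequality holds, so the two infidelities cross at most once, exactly when
   r^h < r^c, at t_* = ln((s^h - r^h)/(r^c - r^h)) / (2(E_2 - E_1)), and the
   threshold condition eps < D_I^c evaluated at t_* is the closed form. *)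

From Stdlib Require Import Reals Lra Lia Psatz.
Open Scope R_scope.

Lemma rsum_vanishing_tail f m n :
  (m <= n)%nat -> (forall i, (m <= i < n)%nat -> f i = 0) -> rsum f n = rsum f m.
Proof.
  induction n as [|n IH]; intros Hmn Hf.
  - now replace m with 0%nat by lia.
  - destruct (Nat.eq_dec m (S n)) as [->|Hm]; [reflexivity|].
    simpl; rewrite IH, (Hf n); [ring | lia | lia | intros i Hi; apply Hf; lia].
Qed.

Lemma DI_two_level n E p t :
  (2 <= n)%nat -> E 0%nat = 0 -> (forall j, (1 < j < n)%nat -> p j = 0) ->
  DI n E p t = 1 - p 0%nat / (p 0%nat + p 1%nat * exp (-2 * E 1%nat * t)).
Proof.
  intros Hn HE0 Hp; unfold DI, pop.
  rewrite (rsum_vanishing_tail _ 2 n); [| lia | intros j Hj; rewrite Hp by lia; ring].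
  simpl; rewrite HE0; replace (-2 * 0 * t) with 0 by ring.
  rewrite exp_0, Rmult_1_r, Rplus_0_l; reflexivity.
Qed.

Lemma DI_three_level n E p t :
  (3 <= n)%nat -> E 0%nat = 0 -> (forall i, (2 < i < n)%nat -> p i = 0) ->
  DI n E p t = 1 - p 0%nat / (p 0%nat + p 1%nat * exp (-2 * E 1%nat * t)
                                        + p 2%nat * exp (-2 * E 2%nat * t)).
Proof.
  intros Hn HE0 Hp; unfold DI, pop.
  rewrite (rsum_vanishing_tail _ 3 n); [| lia | intros i Hi; rewrite Hp by lia; ring].
  simpl; rewrite HE0; replace (-2 * 0 * t) with 0 by ring.
  rewrite exp_0, Rmult_1_r, Rplus_0_l; reflexivity.
Qed.

Lemma DI_two_level_inv n E p t :
  (2 <= n)%nat -> E 0%nat = 0 -> (forall j, (1 < j < n)%nat -> p j = 0) ->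
  0 < p 0%nat -> 0 < p 1%nat ->
  DI n E p t = / (1 + 1 / (p 1%nat / p 0%nat) * exp (2 * E 1%nat * t)).
Proof.
  intros Hn HE0 Hp Hp0 Hp1; rewrite DI_two_level by assumption.
  replace (2 * E 1%nat * t) with (- (-2 * E 1%nat * t)) by ring.
  rewrite exp_Ropp; pose proof (exp_pos (-2 * E 1%nat * t)).
  field; repeat split; nra.
Qed.

Lemma infidelity_gap a b c a' b' E1 E2 t :
  0 < a -> 0 <= b -> 0 <= c -> 0 < a' -> 0 <= b' ->
  exists k, 0 < k /\
    (1 - a / (a + b * exp (-2 * E1 * t) + c * exp (-2 * E2 * t)))
    - (1 - a' / (a' + b' * exp (-2 * E1 * t)))
    = k * (c / a * exp (-2 * (E2 - E1) * t) - (b' / a' - b / a)).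
Proof.
  intros Ha Hb Hc Ha' Hb'.
  set (x := exp (-2 * E1 * t)); set (y := exp (-2 * (E2 - E1) * t)).
  assert (Hz : exp (-2 * E2 * t) = x * y).
  { unfold x, y; rewrite <- exp_plus; f_equal; ring. }
  assert (Hx : 0 < x) by apply exp_pos.
  assert (Hy : 0 < y) by apply exp_pos.
  assert (Hxy : 0 < x * y) by nra.
  assert (Sh : 0 < a + b * x + c * (x * y)) by nra.
  assert (Sc : 0 < a' + b' * x) by nra.
  exists (x * a * a' / ((a + b * x + c * (x * y)) * (a' + b' * x))); split.
  - apply Rdiv_lt_0_compat; repeat apply Rmult_lt_0_compat; assumption.
  - rewrite Hz; field; repeat split; lra.
Qed.

Lemma scaled_difference_sign u v w :
  (exists k, 0 < k /\ u - v = k * w) -> (u < v <-> w < 0) /\ (u = v <-> w = 0).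
Proof.
  intros [k [Hk Huv]]; split; split; intro H.
  - nra.
  - nra.
  - assert (k * w = 0) by lra; destruct (Rmult_integral _ _ H0); lra.
  - rewrite H, Rmult_0_r in Huv; lra.
Qed.

Lemma Rpower_div_exp x a D : D <> 0 -> Rpower x (a / D) = exp (2 * a * (ln x / (2 * D))).
Proof. intro HD; unfold Rpower; f_equal; field; exact HD. Qed.

Section ExponentialCrossing.

Variables A B D : R.
Hypotheses (HA : 0 < A) (HB : 0 < B) (HD : 0 < D).

Let crossing := ln (A / B) / (2 * D).

Lemma decay_at_crossing : A * exp (-2 * D * crossing) = B.
Proof.
  unfold crossing; replace (-2 * D * (ln (A / B) / (2 * D))) with (- ln (A / B)) by (field; lra).
  rewrite exp_Ropp, exp_ln by (apply Rdiv_lt_0_compat; lra); field; lra.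
Qed.

Lemma decay_below_iff t : A * exp (-2 * D * t) < B <-> crossing < t.
Proof.
  rewrite <- decay_at_crossing; split; intro H.
  - apply Rmult_lt_reg_l, exp_lt_inv in H; nra.
  - apply Rmult_lt_compat_l, exp_increasing; nra.
Qed.

Lemma decay_equal_iff t : A * exp (-2 * D * t) = B <-> t = crossing.
Proof.
  rewrite <- decay_at_crossing; split; intro H.
  - apply Rmult_eq_reg_l, exp_inv in H; [nra | lra].
  - now rewrite H.
Qed.

Lemma crossing_pos : B < A -> 0 < crossing.
Proof.
  intro HBA; unfold crossing; apply Rdiv_lt_0_compat; [| lra].
  rewrite <- ln_1; apply ln_increasing; [lra |].
  apply (Rmult_lt_reg_r B); [lra |]; field_simplify; lra.
Qed.

End ExponentialCrossing.

Section ThreeVersusTwoLevels.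

Variables (n : nat) (E ph pc : nat -> R).
Hypotheses (Hn : (3 <= n)%nat) (HE0 : E 0%nat = 0) (HE12 : E 1%nat < E 2%nat).
Hypotheses (Hph_nonneg : forall i, (i < n)%nat -> 0 <= ph i) (Hph_sum : rsum ph n = 1)
  (Hpc_nonneg : forall j, (j < n)%nat -> 0 <= pc j).
Hypotheses (Hph0 : 0 < ph 0%nat) (Hpc0 : 0 < pc 0%nat).
Hypotheses (Hph_supp : forall i, (2 < i < n)%nat -> ph i = 0)
  (Hpc_supp : forall j, (1 < j < n)%nat -> pc j = 0).

Let rh := ph 1%nat / ph 0%nat.
Let rc := pc 1%nat / pc 0%nat.
Let sh := (1 - ph 0%nat) / ph 0%nat.
Let D := E 2%nat - E 1%nat.
Let crossing := ln ((sh - rh) / (rc - rh)) / (2 * D).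

Lemma D_pos : 0 < D.
Proof. unfold D; lra. Qed.

Lemma rh_nonneg : 0 <= rh.
Proof.
  apply Rmult_le_pos; [apply Hph_nonneg; lia | left; apply Rinv_0_lt_compat, Hph0].
Qed.

Lemma excess_ratio : sh - rh = ph 2%nat / ph 0%nat.
Proof.
  assert (Hnorm : ph 0%nat + ph 1%nat + ph 2%nat = 1).
  { rewrite <- Hph_sum, (rsum_vanishing_tail ph 3 n);
      [simpl; ring | lia | intros i Hi; apply Hph_supp; lia]. }
  unfold sh, rh; replace (1 - ph 0%nat) with (ph 1%nat + ph 2%nat) by lra; field; lra.
Qed.

Lemma excess_ratio_nonneg : 0 <= sh - rh.
Proof.
  rewrite excess_ratio; apply Rmult_le_pos;
    [apply Hph_nonneg; lia | left; apply Rinv_0_lt_compat, Hph0].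
Qed.

Lemma DI_compare t :
  (DI n E ph t < DI n E pc t <-> (sh - rh) * exp (-2 * D * t) < rc - rh) /\
  (DI n E ph t = DI n E pc t <-> (sh - rh) * exp (-2 * D * t) = rc - rh).
Proof.
  rewrite (DI_three_level n E ph t), (DI_two_level n E pc t) by (assumption || lia).
  assert (Hph1 : 0 <= ph 1%nat) by (apply Hph_nonneg; lia).
  assert (Hph2 : 0 <= ph 2%nat) by (apply Hph_nonneg; lia).
  assert (Hpc1 : 0 <= pc 1%nat) by (apply Hpc_nonneg; lia).
  destruct (scaled_difference_sign _ _ _ (infidelity_gap (ph 0%nat) (ph 1%nat) (ph 2%nat) (pc 0%nat)
    (pc 1%nat) (E 1%nat) (E 2%nat) t Hph0 Hph1 Hph2 Hpc0 Hpc1)) as [Hlt Heq].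
  rewrite Hlt, Heq, excess_ratio; unfold rc, rh, D; split; split; intro; lra.
Qed.

Lemma rc_lt_sh : DI n E ph 0 > DI n E pc 0 -> rc - rh < sh - rh.
Proof.
  intro HDI0; destruct (DI_compare 0) as [Hlt Heq].
  rewrite Rmult_0_r, exp_0, Rmult_1_r in Hlt, Heq.
  destruct (Rtotal_order (sh - rh) (rc - rh)) as [H | [H | H]];
    [apply Hlt in H | apply Heq in H |]; lra.
Qed.

Lemma DI_cold_at_crossing : rh < rc ->
  DI n E pc crossing = / (1 + 1 / rc * Rpower ((sh - rh) / (rc - rh)) (E 1%nat / D)).
Proof.
  intro Hr; unfold crossing; rewrite Rpower_div_exp by (pose proof D_pos; lra).
  apply DI_two_level_inv; try (assumption || lia).
  pose proof rh_nonneg.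
  replace (pc 1%nat) with (rc * pc 0%nat) by (unfold rc; field; lra).
  apply Rmult_lt_0_compat; [lra | assumption].
Qed.

Lemma mpemba_before_iff eps : DI n E ph 0 > DI n E pc 0 ->
  (mpemba_before n E ph pc eps <->
   (rh < rc /\ eps < / (1 + 1 / rc * Rpower ((sh - rh) / (rc - rh)) (E 1%nat / D)))).
Proof.
  intro HDI0; pose proof (rc_lt_sh HDI0); pose proof excess_ratio_nonneg; pose proof D_pos.
  split.
  - intros [ts [_ [Heq [Hgt Hafter]]]].
    assert (Hr : rh < rc).
    { specialize (Hafter (ts + 1) (Rlt_plus_1 ts)); apply DI_compare in Hafter.
      pose proof (exp_pos (-2 * D * (ts + 1))); nra. }
    assert (Hts : ts = crossing).
    { apply decay_equal_iff; [lra.. | now apply DI_compare]. }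
    split; [exact Hr |].
    rewrite <- DI_cold_at_crossing, <- Hts, <- Heq by exact Hr; exact Hgt.
  - intros [Hr Hthreshold].
    assert (Heq : DI n E ph crossing = DI n E pc crossing)
      by (apply DI_compare, decay_equal_iff; solve [lra | reflexivity]).
    exists crossing; split; [apply crossing_pos; lra | split; [exact Heq | split]].
    + rewrite Heq, DI_cold_at_crossing; assumption.
    + intros t Ht; unfold crossing in Ht; apply DI_compare, decay_below_iff; lra.
Qed.

End ThreeVersusTwoLevels.

Theorem mainTheorem3 (n : nat) (E ph pc : nat -> R) (eps : R) :
  (3 <= n)%nat ->
  is_spectrum n E ->
  is_pop_vector n ph -> is_pop_vector n pc ->
  0 < ph 0%nat -> 0 < pc 0%nat ->
  DI n E ph 0 > DI n E pc 0 ->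
  (forall i, (2 < i < n)%nat -> ph i = 0) ->
  (forall j, (1 < j < n)%nat -> pc j = 0) ->
  0 < eps ->
  let rh := ph 1%nat / ph 0%nat in
  let rc := pc 1%nat / pc 0%nat in
  let sh := (1 - ph 0%nat) / ph 0%nat in
  (mpemba_before n E ph pc eps <->
   (rh < rc /\
    eps < / (1 + (1 / rc) * Rpower ((sh - rh) / (rc - rh)) (E 1%nat / (E 2%nat - E 1%nat))))).
Proof.
  intros Hn [HE0 HE] [Hph_nonneg Hph_sum] [Hpc_nonneg _] Hph0 Hpc0 HDI0 Hph_supp Hpc_supp _.
  apply mpemba_before_iff; try assumption.
  apply HE; lia.
Qed.
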